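(* Let $\mathcal P\subset\mathbb R^n$ be an $n$-dimensional convex polytope and consider $\dot x=Ax+a+Bu$, $x\in\mathcal P$, with $\operatorname{rank}(B)=n-1$, $(A,B)$ controllable and $\operatorname{int}\mathcal P\cap\mathcal O=\emptyset$. Let $z\in\mathcal P$. If $\mathcal B_z\cap\mathcal P\subset\mathcal O$, then $\mathcal B_z\cap\mathcal P$ and $\mathcal P\setminus\mathcal B_z$ are $\mathcal P$-invariant.
   Context: $\mathcal B=\operatorname{Im}(B)$, $\mathcal O=\{x:Ax+a\in\mathcal B\}$; $\beta$ is the unit normal to $\mathcal B$ with $\beta^T(Ax+a)\le0$ on $\mathcal P$; $\mathcal B_z=\{x\in\mathbb R^n:\beta^Tx=\beta^Tz\}$. A set $\mathcal A\subseteq\mathcal P$ is $\mathcal P$-invariant if for every $x_0\in\mathcal A$ and every piecewise continuous control $u$, every trajectory $\phi^u_t(x_0)$ that lies in $\mathcal P$ on an interval $[0,T]$ ($T<\infty$) or $[0,\infty)$ lies in $\mathcal A$ on the same interval. *)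

From HB Require Import structures.
From mathcomp Require Import all_boot all_order all_algebra.
From mathcomp Require Import all_classical all_reals all_analysis.
Set Implicit Arguments. Unset Strict Implicit. Unset Printing Implicit Defensive.
Import Order.TTheory GRing.Theory Num.Theory.
Import numFieldNormedType.Exports.
Local Open Scope classical_set_scope.
Local Open Scope ring_scope.

Section Defs.
Variable R : realType.

Definition dotv (n : nat) (u v : 'cV[R]_n) : R := (u^T *m v) 0 0.

Definition full_dim_polytope (n : nat) (P : set 'cV[R]_n) : Prop :=
  (exists (k : nat) (C : 'M[R]_(k, n)) (d : 'cV[R]_k),
      P = [set x | forall i : 'I_k, (C *m x) i 0 <= d i 0])
  /\ (exists M : R, forall x, P x -> forall i : 'I_n, `|x i 0| <= M)
  /\ (interior P !=set0).

Definition controllable (n m : nat) (A : 'M[R]_n) (B : 'M[R]_(n, m)) : Prop :=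
  \rank (\mxrow_(k < n) (A ^+ k *m B)) = n.

Definition Oset (n m : nat) (A : 'M[R]_n) (a : 'cV[R]_n) (B : 'M[R]_(n, m))
  : set 'cV[R]_n := [set x | exists v : 'cV[R]_m, A *m x + a = B *m v].

Definition Bz (n : nat) (beta z : 'cV[R]_n) : set 'cV[R]_n :=
  [set x | dotv beta x = dotv beta z].

Definition piecewise_continuous (m : nat) (u : R -> 'cV[R]_m) : Prop :=
  (forall lo hi : R, exists s : seq R,
      forall t, lo <= t <= hi -> t \notin s -> {for t, continuous u})
  /\ (forall t : R, cvg (u x @[x --> t^'+]) /\ cvg (u x @[x --> t^'-])).

(* time domain [0,T] for finite T, [0,oo) for T = +oo *)
Definition time_dom (T : \bar R) : set R :=
  [set t | 0 <= t /\ (t%:E <= T)%E].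

Definition trajectory (n m : nat) (A : 'M[R]_n) (a : 'cV[R]_n)
  (B : 'M[R]_(n, m)) (u : R -> 'cV[R]_m) (x0 : 'cV[R]_n) (T : \bar R)
  (phi : R -> 'cV[R]_n) : Prop :=
  phi 0 = x0
  /\ {within time_dom T, continuous phi}
  /\ (forall T' : R, exists s : seq R, forall t : R,
        0 < t -> (t%:E < T)%E -> t < T' -> t \notin s ->
        is_derive t (1 : R) phi (A *m phi t + a + B *m u t)).

Definition P_invariant (n m : nat) (A : 'M[R]_n) (a : 'cV[R]_n)
  (B : 'M[R]_(n, m)) (P S : set 'cV[R]_n) : Prop :=
  S `<=` P /\
  forall x0, S x0 ->
  forall u : R -> 'cV[R]_m, piecewise_continuous u ->
  forall (T : \bar R), (0 <= T)%E ->
  forall phi, trajectory A a B u x0 T phi ->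
  (forall t, time_dom T t -> P (phi t)) ->
  forall t, time_dom T t -> S (phi t).

End Defs.

From HB Require Import structures.
From mathcomp Require Import all_boot all_order all_algebra.
From mathcomp Require Import all_classical all_reals all_analysis.
From mathcomp Require Import ring lra zify.
Set Implicit Arguments. Unset Strict Implicit. Unset Printing Implicit Defensive.
Import Order.TTheory GRing.Theory Num.Theory.
Import numFieldNormedType.Exports.
Local Open Scope classical_set_scope.
Local Open Scope ring_scope.

(* Let e(t) = beta^T (phi t - z).  As beta^T B = 0, e' = beta^T (A phi + a),
   and this drift vanishes on the face B_z \cap P of P because B_z \cap P is
   contained in O.  Farkas' lemma (proved by Fourier-Motzkin elimination)
   turns "an affine function vanishing on a face of a polyhedron" into the
   bound |beta^T (A x + a)| <= K |beta^T (x - z)| on P.  Hence |e'| <= K |e|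
   along trajectories in P, and a Gronwall argument shows that e(t) = 0 iff
   e(0) = 0. *)

Lemma entryD (R : zmodType) m p (M N : 'M[R]_(m, p)) i j :
  (M + N) i j = M i j + N i j.
Proof. by rewrite !mxE. Qed.

Lemma entryB (R : zmodType) m p (M N : 'M[R]_(m, p)) i j :
  (M - N) i j = M i j - N i j.
Proof. by rewrite !mxE. Qed.

Lemma entryN (R : zmodType) m p (M : 'M[R]_(m, p)) i j : (- M) i j = - M i j.
Proof. by rewrite !mxE. Qed.

Lemma entryDZ (R : pzRingType) m p (c : R) (M N : 'M[R]_(m, p)) i j :
  (c *: M + N) i j = c * M i j + N i j.
Proof. by rewrite !mxE. Qed.

Section ConicHull.
Variables (R : realFieldType) (V : lmodType R).

Inductive in_cone (S : seq V) : V -> Prop :=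
| in_cone0 : in_cone S 0
| in_cone_cons v l c : v \in S -> 0 <= c -> in_cone S l -> in_cone S (c *: v + l).

Lemma in_cone_mem S v : v \in S -> in_cone S v.
Proof. by move=> vS; have := in_cone_cons vS ler01 (in_cone0 S); rewrite scale1r addr0. Qed.

Lemma in_cone_add S u w : in_cone S u -> in_cone S w -> in_cone S (u + w).
Proof.
move=> Iu Iw; elim: Iu => [|v l c vS c0 _ IH]; first by rewrite add0r.
by rewrite -addrA; apply: in_cone_cons.
Qed.

Lemma in_cone_scale S u c : 0 <= c -> in_cone S u -> in_cone S (c *: u).
Proof.
move=> c0; elim=> [|v l d vS d0 _ IH]; first by rewrite scaler0; apply: in_cone0.
by rewrite scalerDr scalerA; apply: in_cone_cons => //; rewrite mulr_ge0.
Qed.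

Lemma in_cone_trans S S' u :
  (forall v, v \in S' -> in_cone S v) -> in_cone S' u -> in_cone S u.
Proof.
move=> S'S; elim=> [|v l c vS c0 _ IH]; first exact: in_cone0.
by apply: in_cone_add => //; apply: in_cone_scale => //; apply: S'S.
Qed.

Lemma in_cone_cat_split S1 S2 u : in_cone (S1 ++ S2) u ->
  exists u1 u2, [/\ in_cone S1 u1, in_cone S2 u2 & u = u1 + u2].
Proof.
elim=> [|v l c vS c0 _ [u1 [u2 [I1 I2 ->]]]].
  by exists 0, 0; rewrite addr0; split => //; apply: in_cone0.
move: vS; rewrite mem_cat => /orP[vS|vS].
  by exists (c *: v + u1), u2; rewrite addrA; split=> //; apply: in_cone_cons.
by exists u1, (c *: v + u2); rewrite addrCA; split=> //; apply: in_cone_cons.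
Qed.

Lemma in_cone_seq1 v u : in_cone [:: v] u -> exists2 c, 0 <= c & u = c *: v.
Proof.
elim=> [|w l c wS c0 _ [d d0 ->]]; first by exists 0; rewrite ?scale0r.
move: wS; rewrite inE => /eqP ->; exists (c + d); first by rewrite addr_ge0.
by rewrite scalerDl.
Qed.

End ConicHull.

Lemma exists_between (R : realFieldType) (lo hi : seq R) :
  (forall l u, l \in lo -> u \in hi -> l <= u) ->
  exists t, (forall l, l \in lo -> l <= t) /\ (forall u, u \in hi -> t <= u).
Proof.
elim: lo => [|l lo IH] lohi.
  elim: hi {lohi} => [|u hi [t [_ Ht]]]; first by exists 0.
  exists (Order.min u t); split=> // v; rewrite inE => /orP[/eqP->|vh].
    by rewrite ge_min lexx.
  by rewrite ge_min Ht ?orbT.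
have [t [Hl Hu]] : exists t,
    (forall l, l \in lo -> l <= t) /\ (forall u, u \in hi -> t <= u).
  by apply: IH => l' u l'lo uh; apply: lohi => //; rewrite inE l'lo orbT.
exists (Order.max l t); split.
  move=> v; rewrite inE => /orP[/eqP->|vl]; first by rewrite le_max lexx.
  by rewrite le_max Hl ?orbT.
move=> u uh; rewrite ge_max Hu // andbT; apply: lohi => //; exact: mem_head.
Qed.

Lemma exists_pos_lb (R : realFieldType) (I : eqType) (e : I -> R) (s : seq I) :
  (forall i, i \in s -> 0 < e i) ->
  exists2 eps, 0 < eps & forall i, i \in s -> eps <= e i.
Proof.
elim: s => [|a s IH] epos; first by exists 1.
have [eps ep He] : exists2 eps, 0 < eps & forall i, i \in s -> eps <= e i.
  by apply: IH => i iS; apply: epos; rewrite inE iS orbT.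
exists (Order.min eps (e a)); first by rewrite lt_min ep epos // mem_head.
move=> i; rewrite inE => /orP[/eqP->|iS]; first by rewrite ge_min lexx orbT.
by rewrite ge_min He.
Qed.

Section FourierMotzkin.
Variables (R : realFieldType) (N : nat).

(* A pair (r, c) stands for the constraint [r *m y <= c]. *)
Notation constr := ('rV[R]_N * R^o)%type.

Definition constr_eval (f : constr) (y : 'cV[R]_N) : R := (f.1 *m y) 0 0 - f.2.
Definition feasible (S : seq constr) y := all (fun f => constr_eval f y <= 0) S.

Lemma constr_evalDZ c f g y :
  constr_eval (c *: f + g) y = c * constr_eval f y + constr_eval g y.
Proof.
rewrite /constr_eval /= mulmxDl -scalemxAl !mxE /GRing.scale /=.
by rewrite mulrBr opprD !addrA; congr (_ - _); rewrite addrAC.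
Qed.

Lemma constr_evalZ c f y : constr_eval (c *: f) y = c * constr_eval f y.
Proof.
rewrite -[c *: f]addr0 constr_evalDZ /constr_eval /= mul0mx !mxE.
by rewrite [X in _ + (_ - X)]/0 /= subrr addr0.
Qed.

Lemma constr_eval_shift f y t (j : 'I_N) :
  constr_eval f (y + t *: delta_mx j 0) = constr_eval f y + t * f.1 0 j.
Proof. by rewrite /constr_eval mulmxDr -scalemxAr -colE !mxE addrAC mulrC. Qed.

Definition vanish_from (j : nat) (r : 'rV[R]_N) :=
  forall k : 'I_N, (j <= k)%N -> r 0 k = 0.

Lemma vanish_from0 r : vanish_from 0 r -> r = 0.
Proof. by move=> r0; apply/matrixP => i k; rewrite (ord1 i) r0 // mxE. Qed.

Section Elimination.
Variable j : 'I_N.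

Definition coef (f : constr) := f.1 0 j.
Definition fm_comb (p q : constr) : constr := (- coef q) *: p + (coef p) *: q.
Definition fm_pos S := [seq f <- S | 0 < coef f].
Definition fm_neg S := [seq f <- S | coef f < 0].
Definition fm_elim (S : seq constr) := [seq f <- S | coef f == 0] ++
  [seq fm_comb p q | p <- fm_pos S, q <- fm_neg S].

Lemma fm_elim_cone S f : f \in fm_elim S -> in_cone S f.
Proof.
rewrite mem_cat => /orP[|/allpairsP[[p q] [/= pS qS ->]]].
  by rewrite mem_filter => /andP[_]; apply: in_cone_mem.
move: pS qS; rewrite !mem_filter => /andP[pp pS] /andP[qn qS].
by apply: in_cone_add; apply: in_cone_scale; rewrite ?oppr_ge0 ?ltW //;
  apply: in_cone_mem.
Qed.

Lemma fm_elim_vanish S : (forall f, f \in S -> vanish_from j.+1 f.1) ->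
  forall f, f \in fm_elim S -> vanish_from j f.1.
Proof.
move=> Svan f; rewrite mem_cat => /orP[|/allpairsP[[p q] [/= pS qS ->]]].
  rewrite mem_filter => /andP[/eqP c0 fS] k.
  rewrite leq_eqVlt => /orP[/eqP jk|jk]; last exact: Svan.
  by move: c0; rewrite /coef; have -> : j = k by apply: val_inj.
move: pS qS; rewrite !mem_filter => /andP[pp pS] /andP[qn qS] k.
rewrite /fm_comb /= !mxE leq_eqVlt => /orP[/eqP jk|jk].
  have -> : k = j by apply: val_inj.
  by rewrite /coef; ring.
by rewrite !(Svan p) // !(Svan q) // !mulr0 addr0.
Qed.

Lemma fm_elim_feasible S y :
  feasible (fm_elim S) y -> exists t, feasible S (y + t *: delta_mx j 0).
Proof.
move=> /allP feas_y.
(* Constraints with a negative (positive) coefficient bound the shift [t]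
   from below (above); the combined constraints say each lower bound is at
   most each upper bound. *)
pose lo := [seq constr_eval q y / (- coef q) | q <- fm_neg S].
pose hi := [seq - constr_eval p y / coef p | p <- fm_pos S].
have [t [Hlo Hhi]] : exists t,
    (forall l, l \in lo -> l <= t) /\ (forall u, u \in hi -> t <= u).
  apply: exists_between => l u /mapP[q qS ->] /mapP[p pS ->].
  have pq : fm_comb p q \in fm_elim S.
    by rewrite mem_cat; apply/orP; right; apply: allpairs_f.
  have := feas_y _ pq; rewrite /fm_comb constr_evalDZ constr_evalZ.
  move: pS qS; rewrite !mem_filter => /andP[pp _] /andP[qn _] ineq.
  by rewrite ler_pdivrMr ?oppr_gt0 // mulrAC ler_pdivlMr //; nra.
exists t; apply/allP => f fS; rewrite constr_eval_shift -/(coef f).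
case: (ltgtP (coef f) 0) => cf.
- have : constr_eval f y / (- coef f) \in lo by apply: map_f; rewrite mem_filter cf.
  by move/Hlo; rewrite ler_pdivrMr ?oppr_gt0 //; nra.
- have : - constr_eval f y / coef f \in hi by apply: map_f; rewrite mem_filter cf.
  by move/Hhi; rewrite ler_pdivlMr //; nra.
- by rewrite cf mulr0 addr0; apply: feas_y; rewrite mem_cat mem_filter cf eqxx fS.
Qed.

End Elimination.

Lemma infeasible_cert_vanish k : (k <= N)%N -> forall S : seq constr,
  (forall f, f \in S -> vanish_from k f.1) -> (forall y, ~~ feasible S y) ->
  exists f, [/\ in_cone S f, f.1 = 0 & f.2 < 0].
Proof.
elim: k => [_|k IH kN] S Svan Sinf.
  have := Sinf 0; rewrite /feasible -has_predC => /hasP[f fS /=].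
  rewrite -ltNge /constr_eval mulmx0 mxE sub0r oppr_gt0 => f2.
  by exists f; split=> //; [apply: in_cone_mem | apply/vanish_from0/Svan].
pose j := Ordinal kN.
have [f [If f1 f2]] : exists f, [/\ in_cone (fm_elim j S) f, f.1 = 0 & f.2 < 0].
  apply: IH; [exact: ltnW | exact: fm_elim_vanish |].
  move=> y; apply/negP => /fm_elim_feasible [t St].
  by have := Sinf (y + t *: delta_mx j 0); rewrite St.
by exists f; split=> //; apply: in_cone_trans If => v; apply: fm_elim_cone.
Qed.

Lemma infeasible_cert (S : seq constr) : (forall y, ~~ feasible S y) ->
  exists f, [/\ in_cone S f, f.1 = 0 & f.2 < 0].
Proof.
apply: (@infeasible_cert_vanish N (leqnn N)) => f _ k kN.
by have := ltn_ord k; rewrite ltnNge kN.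
Qed.

Lemma in_cone_pair0 (S : seq 'rV[R]_N) (u : constr) :
  in_cone [seq (r, 0 : R^o) | r <- S] u -> exists2 w, in_cone S w & u = (w, 0).
Proof.
elim=> [|v l c vS c0 _ [w Iw ->]]; first by exists 0; [apply: in_cone0|].
case/mapP: vS => x xS ->; exists (c *: x + w); first exact: in_cone_cons.
by apply: injective_projections => //=; rewrite scaler0 addr0.
Qed.

Lemma farkas (S : seq 'rV[R]_N) (g : 'rV[R]_N) :
  (forall y : 'cV[R]_N, (forall r, r \in S -> (r *m y) 0 0 <= 0) ->
     (g *m y) 0 0 <= 0) ->
  in_cone S g.
Proof.
move=> Sg.
pose S' : seq constr := [seq (r, 0 : R^o) | r <- S] ++ [:: (- g, -1 : R^o)].
have [f [If f1 f2]] : exists f, [/\ in_cone S' f, f.1 = 0 & f.2 < 0].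
  apply: infeasible_cert => y; apply/negP; rewrite /feasible all_cat => /andP[/allP S'y].
  rewrite /= andbT /constr_eval /= mulNmx mxE opprK.
  have Sy : forall r, r \in S -> (r *m y) 0 0 <= 0.
    by move=> r rS; have := S'y _ (map_f _ rS); rewrite /constr_eval /= subr0.
  by have := Sg y Sy; lra.
have [u1 [u2 [I1 I2 fE]]] := in_cone_cat_split If.
have [w Iw u1E] := in_cone_pair0 I1.
have [c c0 u2E] := in_cone_seq1 I2.
move: f1 f2; rewrite fE u1E u2E /= => f1 f2.
have cpos : 0 < c by have : 0 + c * -1 < 0 := f2; lra.
have wE : w = c *: g by move/eqP: f1; rewrite scalerN addr_eq0 opprK => /eqP.
have -> : g = c^-1 *: w by rewrite wE scalerA mulVf ?gt_eqF // scale1r.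
by apply: in_cone_scale => //; rewrite invr_ge0 ltW.
Qed.

End FourierMotzkin.

Section PolyhedronFaceBound.
Variables (R : realFieldType) (n k : nat).
Variables (C : 'M[R]_(k, n)) (d : 'cV[R]_k) (beta z : 'cV[R]_n).

Let inP (x : 'cV[R]_n) := forall i, (C *m x) i 0 <= d i 0.
Let active := [seq i <- enum 'I_k | (C *m z) i 0 == d i 0].
Let tangent := [seq row i C | i <- active] ++ [:: beta^T; - beta^T].

Lemma tangent_cone_bound l : inP z -> in_cone tangent l ->
  exists K, forall x, inP x -> (l *m (x - z)) 0 0 <= K * `|(beta^T *m (x - z)) 0 0|.
Proof.
move=> Pz; elim=> [|v l' c vS c0 _ [K HK]].
  by exists 0 => x _; rewrite mul0mx mxE mul0r.
move: vS; rewrite mem_cat => /orP[/mapP[i iact ->]|].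
  exists K => x Px; rewrite mulmxDl -scalemxAl entryDZ.
  have : (row i C *m (x - z)) 0 0 <= 0.
    rewrite -row_mul mxE mulmxBr entryB.
    move: iact; rewrite mem_filter => /andP[/eqP -> _].
    by rewrite subr_le0; apply: Px.
  by have := HK x Px; move: c0; rewrite /GRing.scale /=; nra.
rewrite !inE => /orP[/eqP->|/eqP->]; exists (K + c) => x Px;
  rewrite mulmxDl -scalemxAl entryDZ; have := HK x Px;
  set b := (beta^T *m (x - z)) 0 0; rewrite ?mulNmx ?entryN -/b.
  by have := ler_norm b; move: c0; rewrite /GRing.scale /=; nra.
by have := ler_norm (- b); rewrite normrN; move: c0; rewrite /GRing.scale /=; nra.
Qed.

(* A direction [y] that weakly satisfies the tangent constraints points into
   the polyhedron, so [z + eps y] lies on the face for small [eps] > 0. *)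
Lemma tangent_face_direction (L : 'rV[R]_n) : inP z ->
  (forall x, inP x -> (beta^T *m x) 0 0 = (beta^T *m z) 0 0 ->
     (L *m x) 0 0 = (L *m z) 0 0) ->
  forall y : 'cV[R]_n, (forall r, r \in tangent -> (r *m y) 0 0 <= 0) ->
  (L *m y) 0 0 = 0.
Proof.
move=> Pz Lface y ty.
have by0 : (beta^T *m y) 0 0 = 0.
  have b1 : (beta^T *m y) 0 0 <= 0 by apply: ty; rewrite mem_cat !inE eqxx orbT.
  have := ty (- beta^T); rewrite mulNmx entryN mem_cat !inE eqxx !orbT => b2.
  by have := b2 isT; lra.
pose e i := if (C *m z) i 0 == d i 0 then 1
            else (d i 0 - (C *m z) i 0) / (`|(C *m y) i 0| + 1).
have [eps ep He] : exists2 eps, 0 < eps & forall i, i \in enum 'I_k -> eps <= e i.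
  apply: exists_pos_lb => i _; rewrite /e; case: eqP => zi; first exact: ltr01.
  apply: divr_gt0; last by rewrite ltr_pwDr ?ltr01 ?normr_ge0.
  by rewrite subr_gt0 lt_def eq_sym; apply/andP; split; [apply/eqP | apply: Pz].
have Pzy : inP (z + eps *: y).
  move=> i; rewrite mulmxDr -scalemxAr addrC entryDZ.
  have := He i (mem_enum _ _); rewrite /e.
  case: (eqVneq ((C *m z) i 0) (d i 0)) => zi.
    move=> _; have : (C *m y) i 0 <= 0.
      have <- : (row i C *m y) 0 0 = (C *m y) i 0 by rewrite -row_mul mxE.
      apply: ty; rewrite mem_cat; apply/orP; left.
      by apply: map_f; rewrite mem_filter zi eqxx mem_enum.
    by rewrite zi; nra.
  rewrite ler_pdivlMr; last by rewrite ltr_pwDr ?ltr01 ?normr_ge0.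
  by have := ler_norm ((C *m y) i 0); nra.
have := Lface _ Pzy; rewrite !mulmxDr -!scalemxAr !(addrC (_ *m z)) !entryDZ.
rewrite by0 mulr0 add0r => /(_ erefl) /eqP.
by rewrite -subr_eq0 addrK mulf_eq0 gt_eqF //= => /eqP.
Qed.

Lemma polyhedron_face_bound (L : 'rV[R]_n) : inP z ->
  (forall x, inP x -> (beta^T *m x) 0 0 = (beta^T *m z) 0 0 ->
     (L *m x) 0 0 = (L *m z) 0 0) ->
  exists2 K, 0 <= K & forall x, inP x ->
    `|(L *m (x - z)) 0 0| <= K * `|(beta^T *m (x - z)) 0 0|.
Proof.
move=> Pz Lface; have Ly := tangent_face_direction Pz Lface.
have [K1 H1] : exists K, forall x, inP x ->
    (L *m (x - z)) 0 0 <= K * `|(beta^T *m (x - z)) 0 0|.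
  by apply/tangent_cone_bound/farkas => // y /Ly ->.
have [K2 H2] : exists K, forall x, inP x ->
    (- L *m (x - z)) 0 0 <= K * `|(beta^T *m (x - z)) 0 0|.
  by apply/tangent_cone_bound/farkas => // y /Ly; rewrite mulNmx entryN => ->; rewrite oppr0.
exists (`|K1| + `|K2|) => [|x Px]; first by rewrite addr_ge0.
have := H1 x Px; have := H2 x Px; rewrite mulNmx entryN.
set u := (L *m (x - z)) 0 0; set b := `|_|.
have b0 : 0 <= b by apply: normr_ge0.
have := ler_norm K1; have := ler_norm K2; have := normr_ge0 K1; have := normr_ge0 K2.
by case: (lerP 0 u) => u0; [rewrite (ger0_norm u0) | rewrite (ltr0_norm u0)]; nra.
Qed.

End PolyhedronFaceBound.

Section PiecewiseMonotone.
Variable R : realType.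

Lemma pw_derive_le0_nincr (f : R -> R) (s : seq R) (a b : R) :
  a <= b -> {within `[a, b], continuous f} ->
  (forall t, a < t < b -> t \notin s -> exists D, is_derive t 1 f D /\ D <= 0) ->
  f b <= f a.
Proof.
have [N] := ubnP (size s); elim: N s a b => [|N IH] s a b; first by rewrite ltn0.
move=> sN ab fc fd.
case: (ltgtP a b) ab => // [ab _|-> _]; last exact: lexx.
have [/hasP[x xs /andP[ax xb]]|/hasPn s_out] := boolP (has (fun x => a < x < b) s).
  pose s' := [seq y <- s | y != x].
  have s'N : (size s' < N)%N.
    rewrite size_filter; move: sN; rewrite -(count_predC (fun y => y != x) s).
    have : (0 < count (predC (fun y => y != x)) s)%N.
      by rewrite -has_count; apply/hasP; exists x => //=; rewrite negbK.
    lia.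
  have s'P t : t != x -> t \notin s' -> t \notin s by rewrite mem_filter => ->.
  have sub_itv c e : a <= c -> e <= b -> {within `[c, e], continuous f}.
    by move=> ac eb; apply: continuous_subspaceW fc; apply: subset_itv; rewrite bnd_simp.
  apply: (@le_trans _ _ (f x)).
    apply: (IH s') => //; [exact: ltW | exact: sub_itv (ltW ax) (lexx b) |].
    move=> t /andP[xt tb] ts'; apply: fd; first by rewrite tb (lt_trans ax xt).
    by apply: s'P => //; rewrite gt_eqF.
  apply: (IH s') => //; [exact: ltW | exact: sub_itv (lexx a) (ltW xb) |].
  move=> t /andP[aT tx] ts'; apply: fd; first by rewrite aT (lt_trans tx xb).
  by apply: s'P => //; rewrite lt_eqF.
have dfD t : t \in `]a, b[ -> is_derive t 1 f ('D_1 f t) /\ 'D_1 f t <= 0.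
  rewrite in_itv /= => tab.
  have tns : t \notin s by apply/negP => /s_out; rewrite tab.
  by have [D [dD D0]] := fd t tab tns; rewrite derive_val.
have [c cab E] := MVT ab (fun t ht => (dfD t ht).1) fc.
rewrite -subr_le0 E; have := (dfD c cab).2; have : 0 < b - a by rewrite subr_gt0.
nra.
Qed.

Lemma pw_derive_ge0_ndecr (f : R -> R) (s : seq R) (a b : R) :
  a <= b -> {within `[a, b], continuous f} ->
  (forall t, a < t < b -> t \notin s -> exists D, is_derive t 1 f D /\ 0 <= D) ->
  f a <= f b.
Proof.
move=> ab cf fd; have := @pw_derive_le0_nincr (fun x => - f x) s a b ab.
rewrite lerN2; apply; first by move=> x; apply: continuousN; apply: cf.
move=> t tab ts; have [D [dD D0]] := fd t tab ts; exists (- D).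
by rewrite oppr_le0; split=> //; apply: is_deriveN.
Qed.

End PiecewiseMonotone.

Section Gronwall.
Variable R : realType.

Lemma is_derive_expR_scale_sqr (e : R -> R) (c t D : R) : is_derive t 1 e D ->
  is_derive t 1 (fun s => expR (c * s) * (e s * e s))
    (expR (c * t) * (e t * D + e t * D) + (e t * e t) * (expR (c * t) * c)).
Proof.
move=> eD.
have cD : is_derive t 1 (fun s : R => c * s) c.
  by apply: (is_derive_eq (is_deriveZ c (is_derive_id t 1))); rewrite /GRing.scale /= mulr1.
have expD := is_derive1_comp (is_derive_expR (c * t)) cD.
exact: (is_derive_eq (is_deriveM expD (is_deriveM eD eD))).
Qed.

Lemma continuous_expR_scale_sqr (e : R -> R) (c : R) (A : set R) :
  {within A, continuous e} ->
  {within A, continuous (fun s => expR (c * s) * (e s * e s))}.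
Proof.
move=> ce x.
have ce2 : {within A, continuous (fun s => e s * e s)}.
  by move=> y; apply: (@continuousM R (subspace A) (from_subspace A e)); apply: ce.
have cexp : {within A, continuous (fun s => expR (c * s))}.
  apply: continuous_subspaceT => y; apply: continuous_comp; last exact: continuous_expR.
  by apply: (@continuousM R R (fun _ => c) id); [apply: cst_continuous|].
exact: (@continuousM R (subspace A) (from_subspace A (fun s => expR (c * s)))
  (from_subspace A (fun s => e s * e s)) x (cexp x) (ce2 x)).
Qed.

Lemma mul_deriv_bound (x D K : R) : 0 <= K -> `|D| <= K * `|x| ->
  x * D <= K * (x * x) /\ - (K * (x * x)) <= x * D.
Proof.
move=> K0 hD.
have xD : `|x * D| <= K * (x * x).
  have xx : `|x| * `|x| = x * x by rewrite -normrM ger0_norm // -expr2 sqr_ge0.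
  rewrite normrM; have := normr_ge0 x; have := normr_ge0 D; nra.
by have := ler_norm (x * D); have := ler_norm (- (x * D)); rewrite normrN; lra.
Qed.

(* The weights [exp(-2Kt)] and [exp(2Kt)] make [e^2] nonincreasing, resp.
   nondecreasing, so [e] cannot leave or reach [0]. *)
Lemma gronwall_eq0 (e : R -> R) (T : \bar R) (K : R) : 0 <= K ->
  {within time_dom T, continuous e} ->
  (forall T', exists s : seq R, forall t, 0 < t -> (t%:E < T)%E -> t < T' ->
     t \notin s -> exists D, is_derive t 1 e D /\ `|D| <= K * `|e t|) ->
  forall t, time_dom T t -> (e t == 0) = (e 0 == 0).
Proof.
move=> K0 ce ed t [t0 tT].
have [s Hs] := ed (t + 1).
have cet : {within `[0, t], continuous e}.
  apply: continuous_subspaceW ce => x /=; rewrite in_itv /= => /andP[x0 xt].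
  by split=> //; apply: le_trans tT; rewrite lee_fin.
have Hd u : 0 < u < t -> u \notin s ->
    exists D, is_derive u 1 e D /\ `|D| <= K * `|e u|.
  move=> /andP[u0 ut] us; apply: Hs => //; last by rewrite (lt_trans ut) ?ltrDl.
  by apply: lt_le_trans tT; rewrite lte_fin.
have [e0|e0] := eqVneq (e 0) 0.
  have : expR (- (2 * K) * t) * (e t * e t) <= expR (- (2 * K) * 0) * (e 0 * e 0).
    apply: (@pw_derive_le0_nincr _ (fun s => expR (- (2 * K) * s) * (e s * e s))
      s 0 t t0 (continuous_expR_scale_sqr cet)).
    move=> u ut us; have [D [dD hD]] := Hd u ut us.
    eexists; split; first exact: is_derive_expR_scale_sqr.
    have [h1 h2] := mul_deriv_bound K0 hD.
    by have := expR_gt0 (- (2 * K) * u); nra.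
  rewrite e0 !mulr0 => et; apply/eqP/eqP.
  rewrite -sqrf_eq0 eq_le sqr_ge0 andbT expr2.
  by have := expR_gt0 (- (2 * K) * t); nra.
have : expR ((2 * K) * 0) * (e 0 * e 0) <= expR ((2 * K) * t) * (e t * e t).
  apply: (@pw_derive_ge0_ndecr _ (fun s => expR ((2 * K) * s) * (e s * e s))
    s 0 t t0 (continuous_expR_scale_sqr cet)).
  move=> u ut us; have [D [dD hD]] := Hd u ut us.
  eexists; split; first exact: is_derive_expR_scale_sqr.
  have [h1 h2] := mul_deriv_bound K0 hD.
  by have := expR_gt0 ((2 * K) * u); nra.
rewrite mulr0 expR0 mul1r => ineq; apply/negbTE/eqP => et.
have : 0 < e 0 * e 0 by rewrite -expr2 exprn_even_gt0.
by move: ineq; rewrite et !mulr0; lra.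
Qed.

End Gronwall.

Section DotProduct.
Variables (R : realType) (n : nat) (beta : 'cV[R]_n).

Lemma dotv_sum x : dotv beta x = \sum_(j < n) beta j 0 * x j 0.
Proof. by rewrite /dotv mxE; apply: eq_bigr => j _; rewrite mxE. Qed.

Lemma continuous_dotv : continuous (dotv beta).
Proof.
have -> : dotv beta = \sum_(j < n) (fun x : 'cV[R]_n => beta j 0 * x j 0).
  by rewrite fct_sumE; apply/funext => x; rewrite dotv_sum.
elim/big_ind: _ => [|f g cf cg x|j _ x]; first exact: cst_continuous.
  by apply: continuousD; [apply: cf | apply: cg].
by apply: continuousM; [apply: cst_continuous | apply: coord_continuous].
Qed.

Lemma continuous_dotv_subr (phi : R -> 'cV[R]_n) (A : set R) c :
  {within A, continuous phi} -> {within A, continuous (fun s => dotv beta (phi s) - c)}.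
Proof.
move=> cphi x.
apply: (@continuousD R R (subspace A) (from_subspace A (fun s => dotv beta (phi s)))
  (fun _ => - c)); last exact: cst_continuous.
apply: (@continuous_comp _ _ _ (from_subspace A phi) (dotv beta)); first exact: cphi.
exact: continuous_dotv.
Qed.

Lemma is_derive_dotv (phi : R -> 'cV[R]_n) (t : R) (D : 'cV[R]_n) :
  is_derive t 1 phi D -> is_derive t 1 (fun s => dotv beta (phi s)) (dotv beta D).
Proof.
move=> phiD; have dphi : derivable phi t 1 := @ex_derive _ _ _ _ _ _ _ phiD.
have entryD j : is_derive t 1 (fun s => phi s j 0) (D j 0).
  apply: DeriveDef; first exact: ((derivable_mxP phi t 1).1 dphi j 0).
  by have := derive_mx dphi; rewrite derive_val => /matrixP /(_ j 0); rewrite mxE.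
have sumD := @is_derive_sum R R R n (fun j s => beta j 0 * phi s j 0) t 1
  (fun j => beta j 0 * D j 0) (fun j => is_deriveZ (beta j 0) (entryD j)).
have -> : (fun s => dotv beta (phi s)) = \sum_(j < n) (fun s => beta j 0 * phi s j 0).
  by rewrite fct_sumE; apply/funext => x; rewrite dotv_sum.
by apply: (is_derive_eq sumD); rewrite dotv_sum.
Qed.

End DotProduct.

Lemma face_drift_bound (R : realType) n m (P : set 'cV[R]_n) (A : 'M[R]_n)
    (a : 'cV[R]_n) (B : 'M[R]_(n, m)) (beta z : 'cV[R]_n) :
  (exists k (C : 'M[R]_(k, n)) (d : 'cV[R]_k),
      P = [set x | forall i : 'I_k, (C *m x) i 0 <= d i 0]) ->
  P z -> beta^T *m B = 0 -> Bz beta z `&` P `<=` Oset A a B ->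
  exists2 K, 0 <= K & forall x, P x ->
    `|dotv beta (A *m x + a)| <= K * `|dotv beta x - dotv beta z|.
Proof.
move=> [k [C [d ->]]] Pz hB face_O.
have drift0 x : Oset A a B x -> dotv beta (A *m x + a) = 0.
  by move=> [v ->]; rewrite /dotv mulmxA hB mul0mx mxE.
have driftE x : dotv beta (A *m x + a) =
    ((beta^T *m A) *m (x - z)) 0 0 + dotv beta (A *m z + a).
  by rewrite /dotv !mulmxDr !mulmxN !mulmxA !entryD entryN; ring.
have drift_z : dotv beta (A *m z + a) = 0 by apply/drift0/face_O.
have Lface (x : 'cV[R]_n) : (forall i, (C *m x) i 0 <= d i 0) ->
    (beta^T *m x) 0 0 = (beta^T *m z) 0 0 ->
    ((beta^T *m A) *m x) 0 0 = ((beta^T *m A) *m z) 0 0.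
  move=> Px bx; have Ox : Oset A a B x by apply: face_O; split.
  move: (driftE x); rewrite drift0 // drift_z addr0 mulmxBr entryB.
  by move/esym/eqP; rewrite subr_eq0 => /eqP.
have [K K0 HK] := polyhedron_face_bound Pz Lface.
exists K => // x Px.
by rewrite driftE drift_z addr0 /dotv -entryB -mulmxBr; apply: HK.
Qed.

Lemma trajectory_dotv_eq (R : realType) n m (P : set 'cV[R]_n) (A : 'M[R]_n)
    (a : 'cV[R]_n) (B : 'M[R]_(n, m)) (beta z x0 : 'cV[R]_n)
    (u : R -> 'cV[R]_m) (T : \bar R) (phi : R -> 'cV[R]_n) (K : R) :
  0 <= K ->
  (forall x, P x -> `|dotv beta (A *m x + a)| <= K * `|dotv beta x - dotv beta z|) ->
  beta^T *m B = 0 -> trajectory A a B u x0 T phi ->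
  (forall t, time_dom T t -> P (phi t)) ->
  forall t, time_dom T t ->
  (dotv beta (phi t) == dotv beta z) = (dotv beta x0 == dotv beta z).
Proof.
move=> K0 drift hB [<- [cphi dphi]] inP t tT.
rewrite -(subr_eq0 (dotv beta (phi t))) -(subr_eq0 (dotv beta (phi 0))).
apply: (gronwall_eq0 K0 (continuous_dotv_subr (beta := beta) (c := dotv beta z) cphi)) => // T'.
have [s Hs] := dphi T'; exists s => t' t'0 t'T t'T' t's.
have Pt' : P (phi t') by apply: inP; split; apply: ltW.
exists (dotv beta (A *m phi t' + a)); split; last exact: drift.
have driftB : dotv beta (A *m phi t' + a + B *m u t') = dotv beta (A *m phi t' + a).
  by rewrite /dotv [in LHS]mulmxDr entryD (mulmxA _ B) hB mul0mx [X in _ + X]mxE addr0.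
apply: (is_derive_eq (is_deriveB (is_derive_dotv beta (Hs _ t'0 t'T t'T' t's))
  (is_derive_cst (dotv beta z) t' 1))).
by rewrite subr0 driftB.
Qed.

Theorem lemma4 (R : realType) (n m : nat) (P : set 'cV[R]_n)
  (A : 'M[R]_n) (a : 'cV[R]_n) (B : 'M[R]_(n, m)) (beta z : 'cV[R]_n) :
  full_dim_polytope P ->
  (\rank B).+1 = n ->
  controllable A B ->
  interior P `&` Oset A a B = set0 ->
  dotv beta beta = 1 ->
  beta^T *m B = 0 ->
  (forall x, P x -> dotv beta (A *m x + a) <= 0) ->
  P z ->
  Bz beta z `&` P `<=` Oset A a B ->
  P_invariant A a B P (Bz beta z `&` P) /\
  P_invariant A a B P (P `\` Bz beta z).
Proof.
move=> [Ppoly _] _ _ _ _ hB _ Pz face_O.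
have [K K0 drift] := face_drift_bound Ppoly Pz hB face_O.
split; split=> [x [] // | x0 Sx0 u _ T _ phi tr inP t tT].
- case: Sx0 => bx0 _; split; last exact: inP.
  rewrite /Bz /=; apply/eqP.
  by rewrite (trajectory_dotv_eq K0 drift hB tr inP tT); apply/eqP.
- case: Sx0 => _ bx0; split; first exact: inP.
  rewrite /Bz /= => /eqP; rewrite (trajectory_dotv_eq K0 drift hB tr inP tT).
  by move/eqP.
Qed.
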